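(* Let $(\Omega,\mathcal F,Q,(\mathcal F_t)_{t=0}^T)$ be a filtered probability space, $\pi>0$, and $t\in\{0,\dots,T-1\}$. Suppose $c_t:\mathbb R\times\Omega\to\mathbb R$ is $\mathcal B(\mathbb R)\otimes\mathcal F_t$-measurable with $a\mapsto c_t(a)(\omega)$ non-decreasing and continuous, and $\alpha_{t+1}:\mathbb R\times\Omega\to[0,\pi]$ is $\mathcal B(\mathbb R)\otimes\mathcal F$-measurable with $g\mapsto\alpha_{t+1}(g)(\omega)$ non-decreasing for all $\omega\in\Omega$. Let $Q_t$ be a regular version of the $\mathcal F_t$-conditional distribution of $Q$, and let $\varepsilon_{t+1}$ be a random variable such that for each $\omega\in\Omega$ the map $\mathbb R\to[0,\pi]$, $x\mapsto\int_\Omega\alpha_{t+1}(x+\varepsilon_{t+1}(\omega'))(\omega')\,Q_t(d\omega')(\omega)$ is continuous. Then: (i) there exists a unique $\mathcal B(\mathbb R)\otimes\mathcal F_t$-measurable $[0,\pi]$-valued $\alpha_t$ satisfying $$\alpha_t(g)(\omega)=\mathbb E^Q_t\big(\alpha_{t+1}(g-c_t(\alpha_t(g))+\varepsilon_{t+1})\big)(\omega)\quad\text{for all }g\in\mathbb R\text{ and almost all }\omega\in\Omega;$$ (ii) the map $\mathbb R\to[0,\pi]$, $g\mapsto\alpha_t(g)(\omega)$, is non-decreasing and continuous for all $\omega\in\Omega$.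
   Context: $\mathbb E^Q_t$ denotes conditional expectation under $Q$ given $\mathcal F_t$. *)

From HB Require Import structures.
From mathcomp Require Import all_boot all_order all_algebra.
From mathcomp Require Import all_classical all_reals all_analysis.
Set Implicit Arguments. Unset Strict Implicit. Unset Printing Implicit Defensive.
Import Order.TTheory GRing.Theory Num.Theory numFieldNormedType.Exports.
Local Open Scope classical_set_scope.
Local Open Scope ring_scope.

Section defs.
Context {d : measure_display} {Omega : measurableType d} {R : realType}.

Definition sub_sigma_algebra (G : set (set Omega)) : Prop :=
  sigma_algebra setT G /\ G `<=` measurable.

Definition is_filtration (F : nat -> set (set Omega)) (Tn : nat) : Prop :=
  (forall t, (t <= Tn)%N -> sub_sigma_algebra (F t)) /\
  (forall s t, (s <= t)%N -> (t <= Tn)%N -> F s `<=` F t).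

Definition G_measurable {d' : measure_display} {Y : measurableType d'}
  (G : set (set Omega)) (f : Omega -> Y) : Prop :=
  forall B : set Y, measurable B -> G (f @^-1` B).

Definition rectangles (G : set (set Omega)) : set (set (R * Omega)) :=
  fun S => exists A B, measurable A /\ G B /\ S = A `*` B.

Definition jointly_measurable (G : set (set Omega)) (f : R -> Omega -> R) : Prop :=
  forall B : set R, measurable B ->
    <<s rectangles G >> ((fun p : R * Omega => f p.1 p.2) @^-1` B).

Definition regular_cond_distr (Q : probability Omega R) (G : set (set Omega))
    (Qt : Omega -> probability Omega R) : Prop :=
  (forall A, measurable A -> G_measurable G (fun w => fine (Qt w A) : R)) /\
  (forall A B, measurable A -> G B ->
     (Q (A `&` B) = \int[Q]_(w in B) Qt w A)%E).

Definition cond_exp_version (Q : probability Omega R) (G : set (set Omega))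
    (X Y : Omega -> R) : Prop :=
  [/\ Q.-integrable setT (EFin \o X),
      G_measurable G Y,
      Q.-integrable setT (EFin \o Y) &
      forall B, G B -> (\int[Q]_(w in B) (Y w)%:E = \int[Q]_(w in B) (X w)%:E)%E].

End defs.

From HB Require Import structures.
From mathcomp Require Import all_boot all_order all_algebra.
From mathcomp Require Import all_classical all_reals all_analysis.
From mathcomp Require Import measurable_realfun lra.
Import Order.TTheory GRing.Theory Num.Theory numFieldNormedType.Exports.
Set Implicit Arguments. Unset Strict Implicit. Unset Printing Implicit Defensive.
Local Open Scope classical_set_scope.
Local Open Scope ring_scope.

(* Fix w and put H x := \int alpha1 (x + eps) dQt(w), a continuous non-decreasing
   function with values in [0, pi].  The recursion becomes the pathwise equation
   a = H (g - c a): the map a |-> a - H (g - c a) is strictly increasing, continuous,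
   <= 0 at 0 and >= 0 at pi, so it has a unique root alpha g, which is non-decreasing
   and continuous in g; measurability follows from
   {alpha >= x} = {x - H (g - c x) <= 0}.
   Regularity of Qt gives the disintegration
   \int_B \int f (w, w') dQt(w)(w') dQ(w) = \int_B f (w, w) dQ(w)
   for B in F_t and F_t (x) F-measurable f >= 0, since both sides define measures that
   agree on rectangles.  With f (w, w') = alpha1 (g - c (b w) w + eps w') w' it
   identifies E^Q_t[alpha1 (g - c b + eps)] with H (g - c b) for every F_t-measurable
   b; so alpha solves the recursion and any other solution beta satisfies
   beta = H (g - c beta) a.s., i.e. beta = alpha a.s. *)

Section distribution_transfer.
Context d d' (T : measurableType d) (T' : measurableType d') (R : realType).
Variables (P : probability T R) (X : {mfun T >-> T'}).
Local Open Scope ereal_scope.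

Lemma integral_distribution_in (D : set T') (f : T' -> \bar R) :
  measurable D -> measurable_fun D f ->
  \int[distribution P X]_(y in D) f y = \int[P]_(x in X @^-1` D) (f \o X) x.
Proof.
move=> mD mf.
rewrite integralE [RHS]integralE (funepos_comp f X) (funeneg_comp f X).
have mX := measurable_funPT X.
rewrite /distribution !(ge0_integral_pushforward mX)//.
- exact: measurable_funeneg.
- exact: measurable_funepos.
Qed.

Lemma ae_distribution (p : T' -> Prop) :
  {ae distribution P X, forall y, p y} -> {ae P, forall x, p (X x)}.
Proof.
case=> N [mN N0 pN]; exists (X @^-1` N); split => //.
- by rewrite -[X in measurable X]setTI; exact: measurable_funP.
- by move=> x /= npx; apply: pN.
Qed.

End distribution_transfer.

Lemma G_measurable_measurableP d d' (T : measurableType d) (Y : measurableType d')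
    (f : T -> Y) :
  G_measurable measurable f <-> measurable_fun [set: T] f.
Proof.
split=> [mf _ B mB|mf B mB]; first by rewrite setTI; exact: mf.
by have := mf measurableT B mB; rewrite setTI.
Qed.

Lemma jointly_measurable_measurableP d (T : measurableType d) (R : realType)
    (f : R -> T -> R) :
  jointly_measurable measurable f <->
  measurable_fun [set: R * T] (fun p : R * T => f p.1 p.2).
Proof.
rewrite /jointly_measurable.
have -> : <<s rectangles measurable >> = @measurable _ (R * T)%type.
  rewrite measurable_prod_measurableType; congr <<s _ >>.
  apply/funext => S; apply/propext; split.
    by move=> [A [B [mA [mB ->]]]]; exists A => //; exists B.
  by move=> [A mA [B mB <-]]; exists A, B.
split=> [mf _ B mB|mf B mB]; first by rewrite setTI; exact: mf.
by have := mf measurableT B mB; rewrite setTI.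
Qed.

Lemma G_measurable_measurable_fun d d' (Omega : measurableType d)
    (Y : measurableType d') (G : set (set Omega)) (f : Omega -> Y) :
  G `<=` measurable -> G_measurable G f -> measurable_fun [set: Omega] f.
Proof. by move=> G_sub mf _ B mB; rewrite setTI; exact/G_sub/mf. Qed.

Section g_sigma_algebra.
Context d (Omega : measurableType d) (G : set (set Omega)).
Hypothesis sG : sigma_algebra setT G.
Local Notation OmegaG := (g_sigma_algebraType G).

Lemma G_measurableP d' (Y : measurableType d') (f : Omega -> Y) :
  G_measurable G f <-> measurable_fun [set: OmegaG] (f : OmegaG -> Y).
Proof.
rewrite -[X in G_measurable X](measurable_g_measurableTypeE sG).
exact: G_measurable_measurableP.
Qed.

Lemma jointly_measurableP (R : realType) (f : R -> Omega -> R) :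
  jointly_measurable G f <->
  measurable_fun [set: R * OmegaG] (fun p : R * OmegaG => f p.1 p.2).
Proof.
rewrite -[X in jointly_measurable X](measurable_g_measurableTypeE sG).
(* [jointly_measurable] only sees the carrier of [Omega], which [OmegaG] shares. *)
exact: (@jointly_measurable_measurableP _ OmegaG R f).
Qed.

End g_sigma_algebra.

Lemma measurable_fun_comp2 d1 d2 d3 (X : measurableType d1) (Y : measurableType d2)
    (T : measurableType d3) (R : realType) (f : R -> T -> Y) (u : X -> R) (v : X -> T) :
  measurable_fun [set: R * T] (fun p : R * T => f p.1 p.2) ->
  measurable_fun [set: X] u -> measurable_fun [set: X] v ->
  measurable_fun [set: X] (fun x => f (u x) (v x)).
Proof.
move=> mf mu mv; apply: (measurableT_comp mf (g := fun x => (u x, v x))).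
exact/measurable_fun_pairP.
Qed.

Section bounded_integrand.
Context d (T : measurableType d) (R : realType) (P : probability T R).
Variables (pi : R) (f : T -> R).
Hypotheses (mf : measurable_fun [set: T] f) (f_range : forall x, 0 <= f x <= pi).
Local Open Scope ereal_scope.

Lemma bounded_integrable : P.-integrable [set: T] (EFin \o f).
Proof.
apply: measurable_bounded_integrable => //.
  exact: le_lt_trans (probability_le1 P measurableT) (ltey _).
exists pi; split; first exact: num_real.
move=> M piM w _ /=; have /andP[f0 fpi] := f_range w.
by rewrite ger0_norm// ltW// (le_lt_trans fpi).
Qed.

Lemma integral_bounded_range : 0 <= \int[P]_x (f x)%:E <= pi%:E.
Proof.
apply/andP; split.
  by apply: integral_ge0 => x _; rewrite lee_fin; case/andP: (f_range x).
have pi0 : (0 <= pi)%R by case/andP: (f_range point) => /le_trans; apply.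
apply: (@le_trans _ _ (\int[P]_x (cst pi%:E) x)); last first.
  by rewrite integral_cst// -[leRHS]mule1 lee_wpmul2l ?probability_le1// lee_fin.
apply: ge0_le_integral => //.
- by move=> x _; rewrite lee_fin; case/andP: (f_range x).
- by apply/measurable_EFinP.
- by move=> x _; rewrite lee_fin; case/andP: (f_range x).
Qed.

Lemma fine_integral_bounded :
  \int[P]_x (f x)%:E = (fine (\int[P]_x (f x)%:E))%:E /\
  (0 <= fine (\int[P]_x (f x)%:E) <= pi)%R.
Proof.
have /andP[I0 Ipi] := integral_bounded_range.
have Ifin : \int[P]_x (f x)%:E \is a fin_num.
  by rewrite ge0_fin_numE// (le_lt_trans Ipi) ?ltey.
by rewrite fineK//; split => //; rewrite -!lee_fin fineK// I0 Ipi.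
Qed.

End bounded_integrand.

Section fixed_point.
Variables (R : realType) (pi : R) (h c : R -> R).
Hypotheses (pi_ge0 : 0 <= pi) (h_range : forall x, 0 <= h x <= pi)
  (h_homo : {homo h : x y / x <= y}) (h_cont : continuous h)
  (c_homo : {homo c : x y / x <= y}) (c_cont : continuous c).

Let gap g a := a - h (g - c a).

Let gap_homo g : {homo gap g : a b / a < b}.
Proof.
move=> a b ab; apply: ltr_leD => //; rewrite lerN2; apply: h_homo.
by rewrite lerD2l lerN2; apply/c_homo/ltW.
Qed.

Let gap_ler g : {mono gap g : a b / a <= b}.
Proof. exact/le_mono/gap_homo. Qed.

Let gap_ltr g : {mono gap g : a b / a < b}.
Proof. exact/leW_mono/gap_ler. Qed.

Let continuous_gap g : continuous (gap g).
Proof.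
move=> a; apply: cvgB; first exact: cvg_id.
apply: continuous_comp; last exact: h_cont.
by apply: cvgB; [exact: cvg_cst|exact: c_cont].
Qed.

Let continuous_gap_param a : continuous (gap ^~ a).
Proof.
move=> g; apply: cvgB; first exact: cvg_cst.
apply: continuous_comp; last exact: h_cont.
by apply: cvgB; [exact: cvg_id|exact: cvg_cst].
Qed.

Let gap_eq0 g a : (gap g a = 0) <-> (a = h (g - c a)).
Proof.
rewrite /gap; split=> [/eqP|e]; first by rewrite subr_eq0 => /eqP.
by rewrite -e subrr.
Qed.

Let exists_fixpoint g : exists a, a = h (g - c a).
Proof.
have gap0 : gap g 0 <= 0.
  by rewrite /gap sub0r oppr_le0; have /andP[] := h_range (g - c 0).
have gap_pi : 0 <= gap g pi.
  by rewrite /gap subr_ge0; have /andP[] := h_range (g - c pi).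
have gap_cont : {within `[0, pi], continuous (gap g)}.
  exact/continuous_subspaceT/continuous_gap.
have sign_change :
    Num.min (gap g 0) (gap g pi) <= 0 <= Num.max (gap g 0) (gap g pi).
  by rewrite ge_min le_max gap0 gap_pi orbT.
by have [a _ /gap_eq0] := IVT pi_ge0 gap_cont sign_change; exists a.
Qed.

Definition fixpoint g := xget 0 [set a | a = h (g - c a)].

Lemma fixpointE g : fixpoint g = h (g - c (fixpoint g)).
Proof. exact: (xgetPex 0 (exists_fixpoint g)). Qed.

Let gap_fixpoint g : gap g (fixpoint g) = 0.
Proof. exact/gap_eq0/fixpointE. Qed.

Lemma fixpoint_unique g a : a = h (g - c a) -> a = fixpoint g.
Proof.
move=> /gap_eq0 gap_a; apply/le_anti.
by rewrite -(gap_ler g a) -(gap_ler g (fixpoint g)) gap_a gap_fixpoint lexx.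
Qed.

Lemma le_fixpoint g x : (x <= fixpoint g) = (x - h (g - c x) <= 0).
Proof. by rewrite -(gap_ler g x) gap_fixpoint. Qed.

Lemma fixpoint_range g : 0 <= fixpoint g <= pi.
Proof. by rewrite fixpointE. Qed.

Lemma fixpoint_homo : {homo fixpoint : g1 g2 / g1 <= g2}.
Proof.
move=> g1 g2 g12; rewrite le_fixpoint subr_le0 [leLHS]fixpointE.
by apply: h_homo; rewrite lerD2r.
Qed.

(* For [g] near [g0], [gap g] stays negative at [fixpoint g0 - e] and positive at
   [fixpoint g0 + e] by continuity in [g]; monotonicity in the second argument then
   traps [fixpoint g] between these two points. *)
Lemma continuous_fixpoint : continuous fixpoint.
Proof.
move=> g0; apply/cvgrPdist_lt => e e0.
have above : \forall g \near g0, 0 < gap g (fixpoint g0 + e).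
  apply: (cvgr_gt _ (@continuous_gap_param _ g0)).
  by rewrite -(gap_fixpoint g0) gap_ltr ltrDl.
have below : \forall g \near g0, gap g (fixpoint g0 - e) < 0.
  apply: (cvgr_lt _ (@continuous_gap_param _ g0)).
  by rewrite -(gap_fixpoint g0) gap_ltr ltrBlDr ltrDl.
near=> g.
have : 0 < gap g (fixpoint g0 + e) by near: g.
have : gap g (fixpoint g0 - e) < 0 by near: g.
rewrite -(gap_fixpoint g) !gap_ltr => lo up.
by rewrite ltr_norml; apply/andP; split; lra.
Unshelve. all: by end_near.
Qed.

End fixed_point.

Section sub_sigma_algebra.
Context d (Omega : measurableType d) (R : realType).
Variables (Q : probability Omega R) (G : set (set Omega)).
Hypotheses (sG : sigma_algebra setT G) (G_sub : G `<=` measurable).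
Local Notation OmegaG := (g_sigma_algebraType G).
Local Open Scope ereal_scope.

Definition coarsen (w : Omega) : OmegaG := w.

Lemma measurable_coarsen : measurable_fun [set: Omega] coarsen.
Proof.
move=> _ B; rewrite (measurable_g_measurableTypeE sG) setTI => GB.
exact: G_sub.
Qed.

HB.instance Definition _ :=
  isMeasurableFun.Build _ _ _ _ coarsen measurable_coarsen.

Definition QG : probability OmegaG R := distribution Q coarsen.

Lemma G_measurable_ae_eq (b1 b2 : Omega -> R) :
  G_measurable G b1 -> G_measurable G b2 -> Q.-integrable setT (EFin \o b1) ->
  (forall B, G B -> \int[Q]_(w in B) (b1 w)%:E = \int[Q]_(w in B) (b2 w)%:E) ->
  {ae Q, forall w, b1 w = b2 w}.
Proof.
move=> /(G_measurableP sG) mb1 /(G_measurableP sG) mb2 ib1 eqB.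
have mEb1 : measurable_fun [set: OmegaG] (EFin \o b1) by exact/measurable_EFinP.
have mEb2 : measurable_fun [set: OmegaG] (EFin \o b2) by exact/measurable_EFinP.
have QG_ib1 : QG.-integrable setT (EFin \o b1 : OmegaG -> \bar R).
  exact: (integrable_pushforward measurable_coarsen mEb1 ib1 measurableT).
have /ae_distribution : ae_eq QG setT (EFin \o b1) (EFin \o b2).
  apply: integral_ae_eq => // E _ mE.
  rewrite !integral_distribution_in//; [|exact: measurable_funTS..].
  by apply: eqB; move: mE; rewrite (measurable_g_measurableTypeE sG).
by apply: filterS => w /(_ I) [].
Qed.

Section regular_conditional_distribution.
Variable Qt : Omega -> probability Omega R.
Hypothesis Qt_regular : regular_cond_distr Q G Qt.

Definition graph_at (w : OmegaG) (w' : Omega) : OmegaG * Omega := (w, w').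

HB.instance Definition _ (w : OmegaG) :=
  isMeasurableFun.Build _ _ _ _ (graph_at w) (pair1_measurable w).

Definition diagonal (w : Omega) : OmegaG * Omega := (coarsen w, w).

Lemma measurable_diagonal : measurable_fun [set: Omega] diagonal.
Proof.
by apply/measurable_fun_pairP; split; [exact: measurable_coarsen|exact: measurable_id].
Qed.

HB.instance Definition _ :=
  isMeasurableFun.Build _ _ _ _ diagonal measurable_diagonal.

Lemma measurable_Qt A : measurable A ->
  measurable_fun [set: OmegaG] (fun w => Qt w A).
Proof.
move=> mA; have /(G_measurableP sG) mQtA := Qt_regular.1 A mA.
have -> : (fun w => Qt w A) = EFin \o (fun w => fine (Qt w A)).
  apply/funext => w /=; rewrite fineK// ge0_fin_numE//.
  exact: (le_lt_trans (probability_le1 _ mA) (ltey _)).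
exact/measurable_EFinP.
Qed.

Definition Qt_kernel (w : OmegaG) : {measure set Omega -> \bar R} := Qt w.
HB.instance Definition _ := isKernel.Build _ _ _ _ _ Qt_kernel measurable_Qt.
HB.instance Definition _ := Kernel_isProbability.Build _ _ _ _ _ Qt_kernel
  (fun w => probability_setT (Qt w)).

(* [(QG_kernel \; graph_kernel) point] is the measure
   [S |-> \int Qt w (xsection S w) dQG(w)]; the parameter [point] is irrelevant
   because [QG_kernel] is constant. *)
Definition QG_kernel := kprobability
  (measurable_cst (QG : pprobability _ _) : measurable_fun [set: OmegaG] _).

Definition graph_kernel (p : OmegaG * OmegaG) :
  {measure set (OmegaG * Omega) -> \bar R} := distribution (Qt p.2) (graph_at p.2).

Let measurable_graph_kernel U : measurable U ->
  measurable_fun [set: OmegaG * OmegaG] (graph_kernel ^~ U).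
Proof.
move=> mU; have := measurable_fun_xsection_finite_kernel Qt_kernel (mem_set mU).
have -> : graph_kernel ^~ U = (fun w => Qt_kernel w (xsection U w)) \o snd.
  apply/funext => p /=; rewrite /graph_kernel /distribution /pushforward /=.
  by congr (Qt _ _); apply/seteqP; split => w /=; rewrite /xsection /= inE.
by move=> mQtU; exact: measurableT_comp mQtU measurable_snd.
Qed.

HB.instance Definition _ :=
  isKernel.Build _ _ _ _ _ graph_kernel measurable_graph_kernel.
HB.instance Definition _ := Kernel_isProbability.Build _ _ _ _ _ graph_kernel
  (fun p => probability_setT (distribution (Qt p.2) (graph_at p.2))).

Let graph_kernel_rectangle C A : measurable C -> measurable A ->
  (QG_kernel \; graph_kernel) point (C `*` A) = Q (A `&` C).
Proof.
move=> mC mA; rewrite /= /kcomp.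
transitivity (\int[QG]_(w in C) Qt w A).
  rewrite [RHS]integral_mkcond; apply: eq_integral => w _.
  rewrite /graph_kernel /distribution /pushforward /patch /=.
  case: ifPn => [/set_mem Cw|/negP Cw].
    by congr (Qt _ _); apply/seteqP; split => w' /=; [case|].
  transitivity (Qt w set0); last exact: measure0.
  by congr (Qt _ _); apply/seteqP; split => w' //= -[/mem_set].
rewrite /QG /distribution ge0_integral_pushforward//; last first.
  exact: measurable_funTS (measurable_Qt mA).
by rewrite (Qt_regular.2 A C mA)// -(measurable_g_measurableTypeE sG).
Qed.

Lemma kcomp_graph_kernelE S : measurable S ->
  (QG_kernel \; graph_kernel) point S = distribution Q diagonal S.
Proof.
set rect := [set C `*` A | C in @measurable _ OmegaG & A in @measurable _ Omega].
have rectI : setI_closed rect.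
  move=> _ _ [C1 mC1 [A1 mA1 <-]] [C2 mC2 [A2 mA2 <-]].
  exists (C1 `&` C2); first exact: measurableI.
  by exists (A1 `&` A2); [exact: measurableI|rewrite setXI].
have rectT : rect setT by exists setT => //; exists setT => //; rewrite setXTT.
apply: (@measure_unique _ _ _ rect (fun _ => setT)) => //.
- exact: measurable_prod_measurableType.
- by rewrite bigcup_const.
- move=> _ [C mC [A mA <-]]; rewrite graph_kernel_rectangle//.
  by rewrite /distribution /pushforward setIC.
- by move=> _; rewrite -setXTT graph_kernel_rectangle// setIT probability_setT ltey.
Qed.

Lemma integral_disintegration (f : OmegaG * Omega -> \bar R) :
  (forall z, 0 <= f z) -> measurable_fun [set: OmegaG * Omega] f ->
  \int[QG]_w \int[Qt w]_w' f (w, w') = \int[Q]_w f (diagonal w).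
Proof.
move=> f0 mf.
transitivity (\int[QG_kernel point]_w \int[graph_kernel (point, w)]_z f z).
  apply: eq_integral => w _.
  by rewrite /graph_kernel ge0_integral_distribution.
rewrite -integral_kcomp//.
transitivity (\int[distribution Q diagonal]_z f z).
  by apply: eq_measure_integral => S mS _; exact: kcomp_graph_kernelE.
exact: ge0_integral_distribution.
Qed.

Lemma integral_regular_cond_distr (B : set Omega) (f : OmegaG * Omega -> \bar R) :
  G B -> (forall z, 0 <= f z) -> measurable_fun [set: OmegaG * Omega] f ->
  \int[Q]_(w in B) \int[Qt w]_w' f (coarsen w, w') =
  \int[Q]_(w in B) f (diagonal w).
Proof.
move=> GB f0 mf.
have mB : measurable (B : set OmegaG) by rewrite (measurable_g_measurableTypeE sG).
pose fB z := f z * (\1_B z.1)%:E.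
have fB0 z : 0 <= fB z by rewrite mule_ge0// lee_fin.
have mfB : measurable_fun [set: OmegaG * Omega] fB.
  apply: emeasurable_funM => //; apply/measurable_EFinP.
  exact: measurableT_comp (measurable_indic mB) measurable_fst.
rewrite integral_mkcond [RHS]integral_mkcond !epatch_indic /=.
transitivity (\int[QG]_w \int[Qt w]_w' fB (w, w')); last first.
  exact: integral_disintegration.
rewrite ge0_integral_distribution; first last.
- by move=> w; apply: integral_ge0 => w' _.
- exact: (measurable_fun_integral_finite_kernel _ Qt_kernel fB0 mfB).
apply: eq_integral => w _; rewrite /fB /= ge0_integralZr// ?lee_fin//.
exact: measurableT_comp mf (pair1_measurable _).
Qed.

End regular_conditional_distribution.

End sub_sigma_algebra.

Unset Implicit Arguments.

Section backward_recursion_step.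
Context {d : measure_display} {Omega : measurableType d} {R : realType}.
Variables (Q : probability Omega R) (G : set (set Omega))
  (Qt : Omega -> probability Omega R) (pi : R) (c alpha1 : R -> Omega -> R)
  (eps : Omega -> R).
Hypotheses (sG : sigma_algebra setT G) (G_sub : G `<=` measurable)
  (Qt_regular : regular_cond_distr Q G Qt) (pi_gt0 : 0 < pi)
  (c_meas : jointly_measurable G c)
  (c_homo : forall w, {homo c ^~ w : x y / x <= y})
  (c_cont : forall w, continuous (c ^~ w))
  (alpha1_meas : jointly_measurable measurable alpha1)
  (alpha1_range : forall g w, 0 <= alpha1 g w <= pi)
  (alpha1_homo : forall w, {homo alpha1 ^~ w : x y / x <= y})
  (eps_meas : measurable_fun setT eps).
Local Notation OmegaG := (g_sigma_algebraType G).

Let measurable_c :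
  measurable_fun [set: R * OmegaG] (fun p : R * OmegaG => c p.1 p.2).
Proof. exact/(jointly_measurableP sG). Qed.

Let measurable_alpha1 :
  measurable_fun [set: R * Omega] (fun p : R * Omega => alpha1 p.1 p.2).
Proof. exact/jointly_measurable_measurableP. Qed.

Let measurable_alpha1_shift {d'} {X : measurableType d'}
    {u : X -> R} {v : X -> Omega} :
  measurable_fun [set: X] u -> measurable_fun [set: X] v ->
  measurable_fun [set: X] (fun z => alpha1 (u z + eps (v z)) (v z)).
Proof.
move=> mu mv; apply: (measurable_fun_comp2 measurable_alpha1 _ mv).
exact: measurable_funD mu (measurableT_comp eps_meas mv).
Qed.

Let measurable_alpha1_at x :
  measurable_fun [set: Omega] (fun w' => alpha1 (x + eps w') w').
Proof.
by apply: (measurable_alpha1_shift (u := fun=> x) (v := id));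
  [exact: measurable_cst|exact: measurable_id].
Qed.

Definition expected_alpha1 x w :=
  fine (\int[Qt w]_w' (alpha1 (x + eps w') w')%:E).

Let expected_alpha1_bounded x w :
  (\int[Qt w]_w' (alpha1 (x + eps w') w')%:E = (expected_alpha1 x w)%:E)%E /\
  0 <= expected_alpha1 x w <= pi.
Proof.
apply: fine_integral_bounded => [|w']; first exact: measurable_alpha1_at.
exact: alpha1_range.
Qed.

Lemma expected_alpha1E x w :
  (\int[Qt w]_w' (alpha1 (x + eps w') w')%:E = (expected_alpha1 x w)%:E)%E.
Proof. exact: (expected_alpha1_bounded x w).1. Qed.

Lemma expected_alpha1_range x w : 0 <= expected_alpha1 x w <= pi.
Proof. exact: (expected_alpha1_bounded x w).2. Qed.

Lemma expected_alpha1_homo w : {homo expected_alpha1 ^~ w : x y / x <= y}.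
Proof.
move=> x y xy; rewrite -lee_fin -!expected_alpha1E.
apply: ge0_le_integral => //.
- by move=> w' _; rewrite lee_fin; case/andP: (alpha1_range (x + eps w') w').
- exact/measurable_EFinP/measurable_alpha1_at.
- exact/measurable_EFinP/measurable_alpha1_at.
- by move=> w' _; rewrite lee_fin alpha1_homo// lerD2r.
Qed.

Definition Qt_at (p : R * OmegaG) : {measure set Omega -> \bar R} := Qt p.2.

Let measurable_Qt_at U :
  measurable U -> measurable_fun [set: R * OmegaG] (Qt_at ^~ U).
Proof.
by move=> mU; exact: measurableT_comp (measurable_Qt sG Qt_regular mU) measurable_snd.
Qed.

HB.instance Definition _ := isKernel.Build _ _ _ _ _ Qt_at measurable_Qt_at.
HB.instance Definition _ := Kernel_isProbability.Build _ _ _ _ _ Qt_at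
  (fun p => probability_setT (Qt p.2)).

Lemma measurable_expected_alpha1 :
  measurable_fun [set: R * OmegaG] (fun p : R * OmegaG => expected_alpha1 p.1 p.2).
Proof.
pose k (z : (R * OmegaG) * Omega) := (alpha1 (z.1.1 + eps z.2) z.2)%:E.
have k0 z : (0 <= k z)%E.
  by rewrite lee_fin; case/andP: (alpha1_range (z.1.1 + eps z.2) z.2).
have mk : measurable_fun [set: (R * OmegaG) * Omega] k.
  apply/measurable_EFinP/measurable_alpha1_shift; last exact: measurable_snd.
  exact: measurableT_comp measurable_fst measurable_fst.
have := measurable_fun_integral_finite_kernel k Qt_at k0 mk.
rewrite (_ : (fun p => _) = EFin \o (fun p : R * OmegaG => expected_alpha1 p.1 p.2)).
  by move/measurable_EFinP.
by apply/funext => p /=; rewrite -expected_alpha1E.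
Qed.

Hypothesis expected_alpha1_cont : forall w, continuous (expected_alpha1 ^~ w).

Let pi_ge0 : 0 <= pi := ltW pi_gt0.

Definition alpha g w := fixpoint (expected_alpha1 ^~ w) (c ^~ w) g.

Lemma alphaE g w : alpha g w = expected_alpha1 (g - c (alpha g w) w) w.
Proof.
exact: (fixpointE pi_ge0 (expected_alpha1_range ^~ w) (expected_alpha1_cont w)
  (c_cont w)).
Qed.

Lemma alpha_range g w : 0 <= alpha g w <= pi.
Proof.
exact: (fixpoint_range pi_ge0 (expected_alpha1_range ^~ w) (expected_alpha1_cont w)
  (c_cont w)).
Qed.

Lemma alpha_unique g w a : a = expected_alpha1 (g - c a w) w -> a = alpha g w.
Proof.
exact: (fixpoint_unique pi_ge0 (expected_alpha1_range ^~ w) (expected_alpha1_homo w)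
  (expected_alpha1_cont w) (c_homo w) (c_cont w)).
Qed.

Lemma le_alpha g w x : (x <= alpha g w) = (x - expected_alpha1 (g - c x w) w <= 0).
Proof.
exact: (le_fixpoint pi_ge0 (expected_alpha1_range ^~ w) (expected_alpha1_homo w)
  (expected_alpha1_cont w) (c_homo w) (c_cont w)).
Qed.

Lemma alpha_homo w : {homo alpha ^~ w : g1 g2 / g1 <= g2}.
Proof.
exact: (fixpoint_homo pi_ge0 (expected_alpha1_range ^~ w) (expected_alpha1_homo w)
  (expected_alpha1_cont w) (c_homo w) (c_cont w)).
Qed.

Lemma continuous_alpha w : continuous (alpha ^~ w).
Proof.
exact: (continuous_fixpoint pi_ge0 (expected_alpha1_range ^~ w) (expected_alpha1_homo w)
  (expected_alpha1_cont w) (c_homo w) (c_cont w)).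
Qed.

Lemma measurable_alpha :
  measurable_fun [set: R * OmegaG] (fun p : R * OmegaG => alpha p.1 p.2).
Proof.
apply: (measurability _ (RGenCInfty.measurableE R)) => _ [_ [x ->] <-].
pose psi (p : R * OmegaG) := x - expected_alpha1 (p.1 - c x p.2) p.2.
have mpsi : measurable_fun [set: R * OmegaG] psi.
  apply: measurable_funB; first exact: measurable_cst.
  apply: (measurable_fun_comp2 measurable_expected_alpha1); last exact: measurable_snd.
  apply: measurable_funB; first exact: measurable_fst.
  exact: (measurable_fun_comp2 measurable_c (measurable_cst _) measurable_snd).
have -> : [set: R * OmegaG] `&` (fun p => alpha p.1 p.2) @^-1` `[x, +oo[%classic =
    [set: R * OmegaG] `&` psi @^-1` `]-oo, 0]%classic.
  by apply/seteqP; split => p /= [_]; rewrite !in_itv /= ?andbT le_alpha.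
exact: mpsi.
Qed.

Lemma integral_expected_alpha1 (b : Omega -> R) g B :
  G_measurable G b -> G B ->
  (\int[Q]_(w in B) (expected_alpha1 (g - c (b w) w) w)%:E =
   \int[Q]_(w in B) (alpha1 (g - c (b w) w + eps w) w)%:E)%E.
Proof.
move=> /(G_measurableP sG) mb GB.
pose y (w : OmegaG) := g - c (b w) w.
have my : measurable_fun [set: OmegaG] y.
  apply: measurable_funB; first exact: measurable_cst.
  by apply: (measurable_fun_comp2 measurable_c); [exact: mb|exact: measurable_id].
pose f (z : OmegaG * Omega) := (alpha1 (y z.1 + eps z.2) z.2)%:E.
have f0 z : (0 <= f z)%E.
  by rewrite lee_fin; case/andP: (alpha1_range (y z.1 + eps z.2) z.2).
have mf : measurable_fun [set: OmegaG * Omega] f.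
  apply/measurable_EFinP/measurable_alpha1_shift; last exact: measurable_snd.
  exact: measurableT_comp my measurable_fst.
transitivity (\int[Q]_(w in B) \int[Qt w]_w' f (coarsen G w, w'))%E.
  by apply: eq_integral => w _; rewrite -expected_alpha1E.
exact: (integral_regular_cond_distr sG G_sub Qt_regular GB f0 mf).
Qed.

Lemma alpha_cond_exp g :
  cond_exp_version Q G (fun w => alpha1 (g - c (alpha g w) w + eps w) w) (alpha g).
Proof.
have alpha_g_meas : G_measurable G (alpha g).
  apply/(G_measurableP sG).
  exact: (measurableT_comp measurable_alpha (pair1_measurable g)).
split => //.
- apply: bounded_integrable => [|w]; last exact: alpha1_range.
  apply: (measurable_alpha1_shift (v := id)); last exact: measurable_id.
  apply: measurable_funB; first exact: measurable_cst.
  apply: (measurable_fun_comp2 measurable_c _ (measurable_coarsen sG G_sub)).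
  exact: (G_measurable_measurable_fun G_sub alpha_g_meas).
- apply: bounded_integrable => [|w]; last exact: alpha_range.
  exact: (G_measurable_measurable_fun G_sub alpha_g_meas).
- move=> B GB; rewrite -integral_expected_alpha1//.
  by apply: eq_integral => w _; rewrite -alphaE.
Qed.

Lemma cond_exp_version_ae_alpha (b : Omega -> R) g :
  cond_exp_version Q G (fun w => alpha1 (g - c (b w) w + eps w) w) b ->
  {ae Q, forall w, b w = alpha g w}.
Proof.
case=> _ b_meas b_int b_eq.
have : {ae Q, forall w, b w = expected_alpha1 (g - c (b w) w) w}.
  apply: (G_measurable_ae_eq sG G_sub) => // [|B GB]; last first.
    by rewrite b_eq// integral_expected_alpha1.
  apply/(G_measurableP sG).
  apply: (measurable_fun_comp2 measurable_expected_alpha1); last exact: measurable_id.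
  apply: measurable_funB; first exact: measurable_cst.
  by apply: (measurable_fun_comp2 measurable_c); [exact/(G_measurableP sG)|].
by apply: filterS => w; exact: alpha_unique.
Qed.

End backward_recursion_step.

Theorem lemma2 (d : measure_display) (Omega : measurableType d) (R : realType)
  (Q : probability Omega R) (F : nat -> set (set Omega)) (Tn t : nat)
  (pi : R) (c : R -> Omega -> R) (alpha1 : R -> Omega -> R)
  (Qt : Omega -> probability Omega R) (eps : Omega -> R) :
  is_filtration F Tn -> (t < Tn)%N -> 0 < pi ->
  jointly_measurable (F t) c ->
  (forall w, {homo (fun a => c a w) : x y / x <= y}) ->
  (forall w, continuous (fun a : R => c a w)) ->
  jointly_measurable measurable alpha1 ->
  (forall g w, 0 <= alpha1 g w <= pi) ->
  (forall w, {homo (fun g => alpha1 g w) : x y / x <= y}) ->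
  regular_cond_distr Q (F t) Qt ->
  measurable_fun setT eps ->
  (forall w, continuous
     (fun x : R => fine (\int[Qt w]_(w' in setT) (alpha1 (x + eps w') w')%:E))) ->
  let P (alpha : R -> Omega -> R) :=
    [/\ jointly_measurable (F t) alpha,
        (forall g w, 0 <= alpha g w <= pi) &
        forall g, cond_exp_version Q (F t)
          (fun w => alpha1 (g - c (alpha g w) w + eps w) w) (alpha g)] in
  exists alpha : R -> Omega -> R,
    [/\ P alpha,
        (forall beta, P beta -> forall g, {ae Q, forall w, beta g w = alpha g w}) &
        (forall w, {homo (fun g => alpha g w) : x y / x <= y} /\
                   continuous (fun g : R => alpha g w))].
Proof.
move=> F_filt tTn pi_gt0 c_meas c_homo c_cont alpha1_meas alpha1_range
  alpha1_homo Qt_regular eps_meas alpha1_cont P.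
have [sG G_sub] := F_filt.1 t (ltnW tTn).
exists (alpha Qt c alpha1 eps); split; first split.
- by apply/(jointly_measurableP sG); apply: measurable_alpha; eassumption.
- by move=> g w; apply: alpha_range; eassumption.
- by move=> g; apply: alpha_cond_exp; eassumption.
- move=> beta [_ _ beta_cond] g.
  by apply: cond_exp_version_ae_alpha; try eassumption; exact: beta_cond.
- by move=> w; split; [apply: alpha_homo|apply: continuous_alpha]; eassumption.
Qed.
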